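(* Let $(X,\mathscr{R},g)$ be a closed reversible reaction network with reaction energies $g\in\mathbb{R}^{\mathscr{R}}$. Then $(X,\mathscr{R},g)$ is thermodynamic if and only if it contains no perpetuum mobile.
   Context: A reaction network (RN) $(X,\mathscr{R})$ consists of a finite non-empty set $X$ of species and a finite non-empty set $\mathscr{R}$ of reactions. Each reaction $r$ is given by stoichiometric coefficients $s^-_{xr},s^+_{xr}\in\mathbb{N}_0$. The stoichiometric matrix $S\in\mathbb{Z}^{X\times\mathscr{R}}$ has entries $S_{xr}=s^+_{xr}-s^-_{xr}$. The RN is closed if every reaction $r$ has $x,y$ with $S_{xr}<0<S_{yr}$. The reverse $\bar r$ of $r$ has $s^-_{x\bar r}=s^+_{xr}$ and $s^+_{x\bar r}=s^-_{xr}$. The RN is reversible if $r\in\mathscr{R}$ implies $\bar r\in\mathscr{R}$. $(X,\mathscr{R},g)$ is thermodynamic if $g\in(\ker S)^\perp$. A perpetuum mobile is a vector $v\in\mathbb{R}^{\mathscr{R}}$ with all of the following: - $v\ge0$ and $v\ne0$; - $Sv=0$; - $\langle g,v\rangle\neq0$. *)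

From mathcomp Require Import all_boot all_order all_algebra.
Set Implicit Arguments. Unset Strict Implicit. Unset Printing Implicit Defensive.
Import Order.TTheory GRing.Theory Num.Theory.
Local Open Scope ring_scope.

(* A reaction network: species type X and reaction type Rc (finite types),
   with stoichiometric coefficients sm x r = s^-_{xr}, sp x r = s^+_{xr}. *)

Definition stoich (X Rc : finType) (sm sp : X -> Rc -> nat) (x : X) (r : Rc) : int :=
  (sp x r)%:Z - (sm x r)%:Z.

Definition closed_RN (X Rc : finType) (sm sp : X -> Rc -> nat) : Prop :=
  forall r : Rc, exists x y : X,
    (stoich sm sp x r < 0)%R /\ (0 < stoich sm sp y r)%R.

Definition reversible_RN (X Rc : finType) (sm sp : X -> Rc -> nat) : Prop :=
  forall r : Rc, exists rb : Rc,
    forall x : X, sm x rb = sp x r /\ sp x rb = sm x r.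

Definition in_kerS (R : realFieldType) (X Rc : finType) (sm sp : X -> Rc -> nat)
  (v : Rc -> R) : Prop :=
  forall x : X, \sum_(r : Rc) (stoich sm sp x r)%:~R * v r = 0.

Definition dotR (R : realFieldType) (Rc : finType) (g v : Rc -> R) : R :=
  \sum_(r : Rc) g r * v r.

Definition thermodynamic (R : realFieldType) (X Rc : finType)
  (sm sp : X -> Rc -> nat) (g : Rc -> R) : Prop :=
  forall v : Rc -> R, in_kerS sm sp v -> dotR g v = 0.

Definition perpetuum_mobile (R : realFieldType) (X Rc : finType)
  (sm sp : X -> Rc -> nat) (g : Rc -> R) (v : Rc -> R) : Prop :=
  (forall r, 0 <= v r) /\ (exists r, v r != 0) /\ in_kerS sm sp v /\ dotR g v != 0.

From mathcomp Require Import all_boot all_order all_algebra.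
Import Order.TTheory GRing.Theory Num.Theory.

Set Implicit Arguments.
Unset Strict Implicit.
Unset Printing Implicit Defensive.

Local Open Scope ring_scope.

(* Thermodynamic trivially excludes a perpetuum mobile.  Conversely, a flux v in ker S
   is folded into a nonnegative flux by moving every negative rate -v r onto the reverse
   reaction with rate v r.  Since S is odd under reversal, the folded flux stays in ker S;
   testing the absence of perpetua mobilia on e_r + e_(rev r) shows that g is odd under
   reversal too, so folding also preserves <g, v>, which must therefore vanish. *)

Lemma sum_mul_delta (R : pzSemiRingType) (I : finType) (f : I -> R) (i : I) :
  \sum_(j : I) f j * (i == j)%:R = f i.
Proof.
rewrite (bigD1 i) //= eqxx mulr1 big1 ?addr0 // => j.
by rewrite eq_sym => /negbTE ->; rewrite mulr0.
Qed.

Section FoldAlongReversal.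

Variables (R : realDomainType) (Rc : finType) (rev : Rc -> Rc).

Definition fold_rev (v : Rc -> R) (s : Rc) : R :=
  \sum_(r : Rc) (if 0 <= v r then (r == s)%:R * v r else (rev r == s)%:R * - v r).

Lemma fold_rev_ge0 (v : Rc -> R) (s : Rc) : 0 <= fold_rev v s.
Proof.
apply: sumr_ge0 => r _; case: ifP => [v_ge0 | v_lt0]; apply: mulr_ge0 => //.
by rewrite oppr_ge0 ltW // ltNge v_lt0.
Qed.

Lemma sum_mul_fold_rev (f v : Rc -> R) :
  (forall r, f (rev r) = - f r) ->
  \sum_(s : Rc) f s * fold_rev v s = \sum_(r : Rc) f r * v r.
Proof.
move=> f_odd.
under eq_bigr => s _ do rewrite mulr_sumr.
rewrite exchange_big /=; apply: eq_bigr => r _.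
case: (0 <= v r); under eq_bigr => s _ do rewrite mulrA.
  by rewrite -mulr_suml sum_mul_delta.
by rewrite -mulr_suml sum_mul_delta f_odd mulrNN.
Qed.

End FoldAlongReversal.

Section ReversibleNetwork.

Variables (R : realFieldType) (X Rc : finType) (sm sp : X -> Rc -> nat).

Lemma stoich_reverse (r rb : Rc) :
  (forall x, sm x rb = sp x r /\ sp x rb = sm x r) ->
  forall x, stoich sm sp x rb = - stoich sm sp x r.
Proof. by move=> rbE x; rewrite /stoich !(proj1 (rbE x)) !(proj2 (rbE x)) opprB. Qed.

Variable g : Rc -> R.

Lemma nonneg_kerS_orthogonal :
  ~ (exists v, perpetuum_mobile sm sp g v) ->
  forall u : Rc -> R, (forall r, 0 <= u r) -> in_kerS sm sp u -> dotR g u = 0.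
Proof.
move=> noPM u u_ge0 Su0; apply/eqP; apply: contraT => gu_neq0.
have [r ur_neq0] : exists r, u r != 0.
  apply/existsP; apply: contraR gu_neq0 => /existsPn u0.
  by rewrite /dotR big1 // => r _; rewrite (eqP (negbNE (u0 r))) mulr0.
by case: noPM; exists u; split=> //; split; [exists r | split].
Qed.

Variable rev : Rc -> Rc.
Hypothesis stoich_rev : forall x r, stoich sm sp x (rev r) = - stoich sm sp x r.

Lemma in_kerS_fold_rev (v : Rc -> R) :
  in_kerS sm sp v -> in_kerS sm sp (fold_rev rev v).
Proof.
move=> Sv0 x; rewrite sum_mul_fold_rev; first exact: Sv0.
by move=> r; rewrite stoich_rev mulrNz.
Qed.

Lemma energy_reverse :
  ~ (exists v, perpetuum_mobile sm sp g v) -> forall r, g (rev r) = - g r.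
Proof.
move=> noPM r.
pose u s : R := (r == s)%:R + (rev r == s)%:R.
have sum_mul_u f : \sum_(s : Rc) f s * u s = f r + f (rev r).
  by rewrite -!sum_mul_delta -big_split; apply: eq_bigr => s _; rewrite mulrDr.
have : dotR g u = 0.
  apply: nonneg_kerS_orthogonal => // [s | x]; first exact: addr_ge0.
  by rewrite sum_mul_u stoich_rev mulrNz addrN.
by rewrite /dotR sum_mul_u => /eqP; rewrite addr_eq0 => /eqP ->; rewrite opprK.
Qed.

End ReversibleNetwork.

Theorem proposition2 (R : realFieldType) (X Rc : finType)
  (sm sp : X -> Rc -> nat) (g : Rc -> R) :
  (0 < #|X|)%N -> (0 < #|Rc|)%N ->
  closed_RN sm sp -> reversible_RN sm sp ->
  (thermodynamic sm sp g <-> ~ exists v : Rc -> R, perpetuum_mobile sm sp g v).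
Proof.
move=> _ _ _ reversible; split.
  by move=> thermo [v [_ [_ [Sv0]]]]; rewrite thermo // eqxx.
move=> noPM v Sv0.
have [rev revE] := fin_all_exists reversible.
have stoich_rev := fun x r => stoich_reverse (revE r) x.
rewrite /dotR -(sum_mul_fold_rev _ (energy_reverse stoich_rev noPM)).
apply: nonneg_kerS_orthogonal noPM _ (fold_rev_ge0 rev v) _.
exact: in_kerS_fold_rev.
Qed.
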